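(* Let $\mathfrak L_1,\dots,\mathfrak L_n,\mathfrak L$ be complete lattices, let $(\mathcal F_\alpha)_{\alpha\in\mathcal O}$ with $\mathcal F_\alpha:\mathfrak L_1\times\dots\times\mathfrak L_n\to(\mathfrak L\to^+\mathfrak L)$ be a family that is $\liminf$-pullable in all arguments, and let $\phi:\mathcal O\to\mathcal O$ be monotone. Then for every nonzero limit ordinal $\lambda\in\mathcal O$ and all $\mathcal G_i:\mathcal O\to\mathfrak L_i$ ($i=1,\dots,n$), $$\mu^{\liminf_\lambda\phi}\big(\mathcal F_\lambda(\liminf_\lambda\vec{\mathcal G})\big)\sqsubseteq\liminf_{\alpha\to\lambda}\mu^{\phi(\alpha)}\big(\mathcal F_\alpha(\vec{\mathcal G}_\alpha)\big).$$ If moreover $\phi$ is lower semi-continuous (i.e. $\phi(\lambda)\le\liminf_\lambda\phi$ for all nonzero limits $\lambda$), then even $$\mu^{\phi(\lambda)}\big(\mathcal F_\lambda(\liminf_\lambda\vec{\mathcal G})\big)\sqsubseteq\liminf_{\alpha\to\lambda}\mu^{\phi(\alpha)}\big(\mathcal F_\alpha(\vec{\mathcal G}_\alpha)\big).$$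
   Context: $\mathcal O$ is the set of ordinals $\le\top_{\mathsf{ord}}$ for a fixed ordinal $\top_{\mathsf{ord}}$ ($=\beth_\omega$). For $g:\mathcal O\to\mathfrak L$ into a complete lattice and a nonzero limit $\lambda$: $\liminf_\lambda g=\liminf_{\alpha\to\lambda}g(\alpha)=\sup_{\alpha_0<\lambda}\inf_{\alpha_0\le\alpha<\lambda}g(\alpha)$, $\limsup_{\alpha\to\lambda}g(\alpha)=\inf_{\alpha_0<\lambda}\sup_{\alpha_0\le\alpha<\lambda}g(\alpha)$; on products, componentwise. $\mathfrak L\to^+\mathfrak L$ = monotone maps. For $f:\mathfrak L\to\mathfrak L$, $g\in\mathfrak L$: $f^0(g)=g$, $f^{\alpha+1}(g)=f(f^\alpha(g))$, $f^\lambda(g)=\limsup_{\alpha\to\lambda}f^\alpha(g)$; $\mu^\alpha f:=f^\alpha(\bot)$. A family $(\mathcal F_\alpha)_{\alpha\in\mathcal O}$ of maps $\mathfrak K\to\mathfrak K'$ is $\liminf$-pullable if for all $\mathcal G:\mathcal O\to\mathfrak K$ and nonzero limits $\lambda$: $\mathcal F_\gamma(\liminf_{\alpha\to\lambda}\mathcal G_\alpha)\sqsubseteq\liminf_{\alpha\to\lambda}\mathcal F_\gamma(\mathcal G_\alpha)$ for all $\gamma\in\mathcal O$, and $\mathcal F_\lambda(\liminf_{\alpha\to\lambda}\mathcal G_\alpha)\sqsubseteq\liminf_{\alpha\to\lambda}\mathcal F_\alpha(\mathcal G_\alpha)$. ''$\liminf$-pullable in all arguments'' means the family $(\vec{\mathcal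 G},\mathcal X)\mapsto\mathcal F_\alpha(\vec{\mathcal G})(\mathcal X)$ is $\liminf$-pullable. *)

From Stdlib Require Import ClassicalEpsilon.
From mathcomp Require Import all_boot.

Set Implicit Arguments.
Unset Strict Implicit.
Unset Printing Implicit Defensive.

Record clat := CLat {
  car :> Type;
  cle : car -> car -> Prop;
  csup : (car -> Prop) -> car;
  cinf : (car -> Prop) -> car;
  cle_refl : forall x, cle x x;
  cle_trans : forall x y z, cle x y -> cle y z -> cle x z;
  cle_anti : forall x y, cle x y -> cle y x -> x = y;
  csup_ub : forall (S : car -> Prop) x, S x -> cle x (csup S);
  csup_least : forall (S : car -> Prop) y, (forall x, S x -> cle x y) -> cle (csup S) y;
  cinf_lb : forall (S : car -> Prop) x, S x -> cle (cinf S) x;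
  cinf_greatest : forall (S : car -> Prop) y, (forall x, S x -> cle y x) -> cle y (cinf S)
}.
Arguments cle {c} _ _.
Arguments csup {c} _.
Arguments cinf {c} _.

Definition cbot (L : clat) : L := csup (fun _ : L => False).

(** The ordinal range O = {ordinals <= top}: modelled as a complete lattice
    whose order is total and whose strict part is well-founded
    (i.e. a well-order with a greatest element; every such order is
    isomorphic to the set of ordinals <= some ordinal). *)
Record wclat := WCLat {
  wl :> clat;
  wtotal : forall x y : wl, cle x y \/ cle y x;
  wwf : well_founded (fun x y : wl => cle x y /\ x <> y)
}.

Definition olt {O : wclat} (a b : O) : Prop := cle a b /\ a <> b.

Definition is_pred {O : wclat} (b a : O) : Prop :=
  olt b a /\ forall c, olt c a -> cle c b.

Definition is_nz_limit {O : wclat} (lam : O) : Prop :=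
  (exists b, olt b lam) /\ forall b, olt b lam -> exists c, olt b c /\ olt c lam.

Definition liminf {O : wclat} {L : clat} (g : O -> L) (lam : O) : L :=
  csup (fun x => exists a0, olt a0 lam /\
          x = cinf (fun y => exists a, cle a0 a /\ olt a lam /\ y = g a)).

(** Transfinite iteration f^a(g):
    f^0 g = g, f^(b+1) g = f (f^b g), f^lam g = limsup_{b -> lam} f^b g. *)
Definition iter_body (O : wclat) (L : clat) (f : L -> L) (g : L)
    (a : O) (rec : forall b : O, olt b a -> L) : L :=
  match excluded_middle_informative (exists b, olt b a) with
  | right _ => g
  | left _ =>
    match excluded_middle_informative (exists b, is_pred b a) with
    | left H =>
        let (b, Hb) := constructive_indefinite_description _ H in
        f (rec b (proj1 Hb))
    | right _ =>
        cinf (fun x => exists a0, olt a0 a /\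
          x = csup (fun y => exists b (hb : olt b a), cle a0 b /\ y = rec b hb))
    end
  end.

Definition titer (O : wclat) (L : clat) (f : L -> L) (g : L) : O -> L :=
  Fix (@wwf O) (fun _ => L) (@iter_body O L f g).

Definition mu {O : wclat} {L : clat} (a : O) (f : L -> L) : L :=
  @titer O L f (cbot L) a.

Definition monotone_map (L : clat) (f : L -> L) : Prop :=
  forall x y, cle x y -> cle (f x) (f y).

Definition liminf_pullable_all {O : wclat} {n : nat} {Ls : 'I_n -> clat}
    {L : clat} (F : O -> (forall i, Ls i) -> L -> L) : Prop :=
  forall (G : O -> forall i, Ls i) (X : O -> L) (lam : O), is_nz_limit lam ->
    (forall gam : O,
       cle (F gam (fun i => liminf (fun a => G a i) lam) (liminf X lam))
           (liminf (fun a => F gam (G a) (X a)) lam)) /\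
    cle (F lam (fun i => liminf (fun a => G a i) lam) (liminf X lam))
        (liminf (fun a => F a (G a) (X a)) lam).

From Stdlib Require Import ClassicalEpsilon.
From mathcomp Require Import all_boot.
From Stdlib Require Import Classical FunctionalExtensionality.

(* By transfinite induction on the index g, mu^g (F_lam (liminf G)) is below
   liminf_a mu^g (F_a (G_a)): successor steps combine monotonicity of
   F_lam (G) with the diagonal half of pullability, applied to X_a = mu^(g-1)
   (F_a (G_a)); at a limit index the iterate is below the sup of the earlier
   ones, each of which is handled by induction because mu^g f is increasing
   in g for monotone f.  Since mu is increasing in the index, the bound
   transfers from any g to phi(a) as soon as g <= phi(a0) for some a0 < lam.
   Every index strictly below liminf_lam phi is of that form, and
   liminf_lam phi itself is either of that form or is not a successor, in
   which case its iterate is the sup of the iterates below it. *)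

Section TransfiniteIteration.
Context {O : wclat} {L : clat} (f : L -> L).

Lemma titer_unfold (g : L) (a : O) :
  titer f g a = @iter_body O L f g a (fun b _ => titer f g b).
Proof.
  unfold titer. apply (Fix_eq (@wwf O) (fun _ => L) (iter_body f g)).
  intros x h1 h2 E.
  assert (h1 = h2) as ->; [|reflexivity].
  apply functional_extensionality_dep; intro b.
  apply functional_extensionality_dep; intro hb. apply E.
Qed.

Lemma titer_zero (g : L) {a : O} : ~ (exists b, olt b a) -> titer f g a = g.
Proof.
  intro Hzero. rewrite titer_unfold. unfold iter_body.
  destruct (excluded_middle_informative _); [contradiction|reflexivity].
Qed.

Lemma is_pred_uniq {a b b' : O} : is_pred b a -> is_pred b' a -> b = b'.
Proof.
  intros Hb Hb'. apply cle_anti; [apply (proj2 Hb' b (proj1 Hb))|apply (proj2 Hb b' (proj1 Hb'))].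
Qed.

Lemma titer_succ (g : L) {a b : O} : is_pred b a -> titer f g a = f (titer f g b).
Proof.
  intro Hb. rewrite titer_unfold. unfold iter_body.
  destruct (excluded_middle_informative _) as [_|Hzero];
    [|exfalso; apply Hzero; exists b; apply (proj1 Hb)].
  destruct (excluded_middle_informative _) as [Hsucc|Hnsucc];
    [|exfalso; apply Hnsucc; exists b; exact Hb].
  destruct (constructive_indefinite_description _ Hsucc) as [b' Hb'].
  rewrite (is_pred_uniq Hb' Hb). reflexivity.
Qed.

Definition titer_tail_sup (g : L) (a a0 : O) : L :=
  csup (fun y => exists b (hb : olt b a), cle a0 b /\ y = titer f g b).

Lemma titer_limit (g : L) {a : O} :
  (exists b, olt b a) -> ~ (exists b, is_pred b a) ->
  titer f g a = cinf (fun x => exists a0, olt a0 a /\ x = titer_tail_sup g a a0).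
Proof.
  intros Hnz Hnsucc. rewrite titer_unfold. unfold iter_body.
  destruct (excluded_middle_informative _) as [_|Hzero]; [|contradiction].
  destruct (excluded_middle_informative _); [contradiction|reflexivity].
Qed.

Lemma titer_limit_le_tail_sup (g : L) {a a0 : O} :
  olt a0 a -> ~ (exists b, is_pred b a) -> cle (titer f g a) (titer_tail_sup g a a0).
Proof.
  intros Ha0 Hnsucc. rewrite (titer_limit g (ex_intro _ a0 Ha0) Hnsucc).
  apply cinf_lb. exists a0. split; [exact Ha0|reflexivity].
Qed.

End TransfiniteIteration.

Lemma cbot_le (L : clat) (x : L) : cle (cbot L) x.
Proof. unfold cbot. apply csup_least. tauto. Qed.

Section LeastFixpointApproximants.
Context {O : wclat} {L : clat} {f : L -> L} (fmono : monotone_map f).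

Lemma mu_increasing_postfixed (b : O) :
  (forall a, cle a b -> cle (mu a f) (mu b f)) /\ cle (mu b f) (f (mu b f)).
Proof.
  unfold mu. induction b as [b IH] using (well_founded_ind (@wwf O)).
  destruct (classic (exists c, olt c b)) as [Hnz|Hzero].
  2:{ split; [|rewrite (titer_zero f _ Hzero); apply cbot_le].
      intros a Hab. destruct (classic (a = b)) as [->|Hne]; [apply cle_refl|].
      exfalso. apply Hzero. exists a. split; assumption. }
  destruct (classic (exists d, is_pred d b)) as [[d Hd]|Hnsucc].
  - destruct (IH d (proj1 Hd)) as [IHmono IHpost].
    rewrite (titer_succ f _ Hd). split; [|apply fmono, IHpost].
    intros a Hab. destruct (classic (a = b)) as [->|Hne].
    + rewrite (titer_succ f _ Hd). apply cle_refl.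
    + apply cle_trans with (titer f (cbot L) d); [|exact IHpost].
      apply IHmono, (proj2 Hd a (conj Hab Hne)).
  - assert (Hbelow : forall a, olt a b -> cle (titer f (cbot L) a) (titer f (cbot L) b)).
    { intros a Ha. rewrite (titer_limit f _ Hnz Hnsucc). apply cinf_greatest.
      intros x [a0 [Ha0 ->]]. unfold titer_tail_sup.
      destruct (wtotal a a0) as [Hle|Hle].
      - apply cle_trans with (titer f (cbot L) a0); [apply (proj1 (IH a0 Ha0)), Hle|].
        apply csup_ub. exists a0, Ha0. split; [apply cle_refl|reflexivity].
      - apply csup_ub. exists a, Ha. split; [exact Hle|reflexivity]. }
    split.
    + intros a Hab. destruct (classic (a = b)) as [->|Hne]; [apply cle_refl|].
      apply Hbelow. split; assumption.
    + destruct Hnz as [c Hc].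
      apply cle_trans with (1 := titer_limit_le_tail_sup f _ Hc Hnsucc).
      apply csup_least. intros y [b' [hb' [_ ->]]].
      apply cle_trans with (f (titer f (cbot L) b')); [apply (proj2 (IH b' hb'))|].
      apply fmono, Hbelow, hb'.
Qed.

Lemma mu_mono (a b : O) : cle a b -> cle (mu a f) (mu b f).
Proof. exact (proj1 (mu_increasing_postfixed b) a). Qed.

End LeastFixpointApproximants.

Lemma mu_le_sup_lt {O : wclat} {L : clat} (f : L -> L) {b : O} :
  ~ (exists d, is_pred d b) ->
  cle (mu b f) (csup (fun y => exists c, olt c b /\ y = mu c f)).
Proof.
  intro Hnsucc. unfold mu. destruct (classic (exists c, olt c b)) as [[c Hc]|Hzero].
  - apply cle_trans with (1 := titer_limit_le_tail_sup f _ Hc Hnsucc).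
    apply csup_least. intros y [b' [hb' [_ ->]]].
    apply csup_ub. exists b'. split; [exact hb'|reflexivity].
  - rewrite (titer_zero f _ Hzero). apply cbot_le.
Qed.

Section Liminf.
Context {O : wclat} {L : clat}.

Lemma liminf_le_eventually {g h : O -> L} {lam a0 : O} :
  olt a0 lam -> (forall a, cle a0 a -> olt a lam -> cle (g a) (h a)) ->
  cle (liminf g lam) (liminf h lam).
Proof.
  intros Ha0 Hgh. unfold liminf at 1. apply csup_least.
  intros x [a1 [Ha1 ->]].
  assert (Hjoin : exists a2, olt a2 lam /\ cle a0 a2 /\ cle a1 a2).
  { destruct (wtotal a0 a1) as [Hle|Hle].
    - exists a1. split; [exact Ha1|split; [exact Hle|apply cle_refl]].
    - exists a0. split; [exact Ha0|split; [apply cle_refl|exact Hle]]. }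
  destruct Hjoin as [a2 [Ha2 [H02 H12]]].
  apply cle_trans with (cinf (fun y => exists a, cle a2 a /\ olt a lam /\ y = h a)).
  - apply cinf_greatest. intros y [a [H2a [Ha ->]]].
    apply cle_trans with (g a).
    + apply cinf_lb. exists a. split; [apply cle_trans with a2; assumption|split; auto].
    + apply Hgh; [apply cle_trans with a2; assumption|exact Ha].
  - unfold liminf. apply csup_ub. exists a2. split; [exact Ha2|reflexivity].
Qed.

Lemma liminf_le_ub (g : O -> L) (lam : O) (d : L) :
  (forall a, olt a lam -> cle (g a) d) -> cle (liminf g lam) d.
Proof.
  intro Hub. unfold liminf. apply csup_least. intros x [a0 [Ha0 ->]].
  apply cle_trans with (g a0); [|apply Hub, Ha0].
  apply cinf_lb. exists a0. split; [apply cle_refl|split; [exact Ha0|reflexivity]].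
Qed.

End Liminf.

Lemma lt_liminf_le_value {O : wclat} {phi : O -> O} {lam c : O} :
  olt c (liminf phi lam) -> exists a0, olt a0 lam /\ cle c (phi a0).
Proof.
  intro Hc. apply NNPP. intro Hnone. apply (proj2 Hc), cle_anti; [exact (proj1 Hc)|].
  apply liminf_le_ub. intros a Ha.
  destruct (wtotal c (phi a)) as [Hle|Hle]; [|exact Hle].
  exfalso. apply Hnone. exists a. split; assumption.
Qed.

Lemma liminf_not_succ {O : wclat} {phi : O -> O} {lam : O} :
  (forall a, olt a lam -> olt (phi a) (liminf phi lam)) ->
  ~ (exists d, is_pred d (liminf phi lam)).
Proof.
  intros Hbelow [d Hd]. apply (proj2 (proj1 Hd)), cle_anti; [exact (proj1 (proj1 Hd))|].
  apply liminf_le_ub. intros a Ha. apply (proj2 Hd), Hbelow, Ha.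
Qed.

Section PullLiminf.
Context {O : wclat} {n : nat} {Ls : 'I_n -> clat} {L : clat}
  {F : O -> (forall i, Ls i) -> L -> L}
  (Fmono : forall (a : O) (g : forall i, Ls i), monotone_map (F a g))
  (Fpull : liminf_pullable_all F)
  (G : O -> forall i, Ls i) {lam : O} (Hlam : is_nz_limit lam).

Let Flim := F lam (fun i => liminf (fun a => G a i) lam).

Lemma mu_liminf_pull (g : O) :
  cle (mu g Flim) (liminf (fun a => mu g (F a (G a))) lam).
Proof.
  induction g as [g IH] using (well_founded_ind (@wwf O)).
  destruct (classic (exists d, is_pred d g)) as [[d Hd]|Hnsucc].
  - unfold mu. rewrite (titer_succ Flim _ Hd).
    assert (Hunfold : (fun a => titer (F a (G a)) (cbot L) g)
                      = (fun a => F a (G a) (titer (F a (G a)) (cbot L) d))).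
    { apply functional_extensionality; intro a. apply titer_succ, Hd. }
    rewrite Hunfold.
    apply cle_trans with (Flim (liminf (fun a => mu d (F a (G a))) lam)).
    + apply Fmono, IH, (proj1 Hd).
    + exact (proj2 (Fpull G (fun a => mu d (F a (G a))) lam Hlam)).
  - destruct (proj1 Hlam) as [z Hz].
    apply cle_trans with (1 := mu_le_sup_lt Flim Hnsucc).
    apply csup_least. intros y [c [Hc ->]].
    apply cle_trans with (1 := IH c Hc).
    apply (liminf_le_eventually Hz). intros a _ _.
    apply (mu_mono (Fmono a (G a))), (proj1 Hc).
Qed.

Context {phi : O -> O} (phimono : forall a b : O, cle a b -> cle (phi a) (phi b)).

Lemma mu_le_liminf_mu_phi {g a0 : O} :
  olt a0 lam -> cle g (phi a0) ->
  cle (mu g Flim) (liminf (fun a => mu (phi a) (F a (G a))) lam).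
Proof.
  intros Ha0 Hg. apply cle_trans with (1 := mu_liminf_pull g).
  apply (liminf_le_eventually Ha0). intros a Ha _.
  apply (mu_mono (Fmono a (G a))), cle_trans with (phi a0); [exact Hg|apply phimono, Ha].
Qed.

Lemma mu_liminf_phi_pull :
  cle (mu (liminf phi lam) Flim) (liminf (fun a => mu (phi a) (F a (G a))) lam).
Proof.
  destruct (classic (exists a0, olt a0 lam /\ cle (liminf phi lam) (phi a0)))
    as [[a0 [Ha0 Hle]]|Hnone].
  - exact (mu_le_liminf_mu_phi Ha0 Hle).
  - assert (Hbelow : forall a, olt a lam -> olt (phi a) (liminf phi lam)).
    { intros a Ha. destruct (wtotal (liminf phi lam) (phi a)) as [Hle|Hle].
      - exfalso. apply Hnone. exists a. split; assumption.
      - split; [exact Hle|]. intro Heq. apply Hnone. exists a.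
        split; [exact Ha|rewrite Heq; apply cle_refl]. }
    apply cle_trans with (1 := mu_le_sup_lt Flim (liminf_not_succ Hbelow)).
    apply csup_least. intros y [c [Hc ->]].
    destruct (lt_liminf_le_value Hc) as [a0 [Ha0 Hle]].
    exact (mu_le_liminf_mu_phi Ha0 Hle).
Qed.

End PullLiminf.

Theorem theorem4p18 (O : wclat) (n : nat) (Ls : 'I_n -> clat) (L : clat)
  {F : O -> (forall i, Ls i) -> L -> L}
  (Fmono : forall (a : O) (g : forall i, Ls i), monotone_map (F a g))
  (Fpull : liminf_pullable_all F)
  (phi : O -> O) (phimono : forall a b : O, cle a b -> cle (phi a) (phi b)) :
  (forall (lam : O) (Gs : forall i, O -> Ls i), is_nz_limit lam ->
     cle (mu (liminf phi lam) (F lam (fun i => liminf (Gs i) lam)))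
         (liminf (fun a => mu (phi a) (F a (fun i => Gs i a))) lam))
  /\
  ((forall lam : O, is_nz_limit lam -> cle (phi lam) (liminf phi lam)) ->
   forall (lam : O) (Gs : forall i, O -> Ls i), is_nz_limit lam ->
     cle (mu (phi lam) (F lam (fun i => liminf (Gs i) lam)))
         (liminf (fun a => mu (phi a) (F a (fun i => Gs i a))) lam)).
Proof.
  assert (Hliminf : forall (lam : O) (Gs : forall i, O -> Ls i), is_nz_limit lam ->
     cle (mu (liminf phi lam) (F lam (fun i => liminf (Gs i) lam)))
         (liminf (fun a => mu (phi a) (F a (fun i => Gs i a))) lam)).
  { intros lam Gs Hlam.
    exact (mu_liminf_phi_pull Fmono Fpull (fun a i => Gs i a) Hlam phimono). }
  split; [exact Hliminf|].
  intros Hlsc lam Gs Hlam.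
  apply cle_trans with (2 := Hliminf lam Gs Hlam).
  apply (mu_mono (Fmono lam _)), Hlsc, Hlam.
Qed.
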